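(* Let $\phi$ be a flow of a compact metric space $X$. If $Sing(\phi)$ is dynamically isolated, then there is $\beta_0>0$ such that $diam(\phi_{\mathbb{R}}(x))\ge\beta_0$ for every $x\in X\setminus Sing(\phi)$.
   Context: A flow is a continuous $\phi:\mathbb{R}\times X\to X$ with $\phi_0=\mathrm{id}$, $\phi_{t+s}=\phi_t\circ\phi_s$; $\phi_{\mathbb{R}}(x)=\{\phi_t(x):t\in\mathbb{R}\}$; $Sing(\phi)$ is the set of fixed points. A compact invariant set $K$ is dynamically isolated if there is a neighborhood $U$ of $K$ with $K=\bigcap_{t\in\mathbb{R}}\phi_t(U)$. *)

From HB Require Import structures.
From mathcomp Require Import all_boot all_order all_algebra.
From mathcomp Require Import all_classical all_reals all_analysis.
Set Implicit Arguments. Unset Strict Implicit. Unset Printing Implicit Defensive.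
Import Order.TTheory GRing.Theory Num.Theory numFieldTopology.Exports numFieldNormedType.Exports.
Local Open Scope classical_set_scope.
Local Open Scope ring_scope.

Section Flows.
Context {R : realType} {X : metricType R}.

Definition is_flow (phi : R * X -> X) : Prop :=
  continuous phi /\
  (forall x, phi (0, x) = x) /\
  (forall t s x, phi (t + s, x) = phi (t, phi (s, x))).

Definition flow_orbit (phi : R * X -> X) (x : X) : set X :=
  [set phi (t, x) | t in [set: R]].

Definition Sing (phi : R * X -> X) : set X :=
  [set x | forall t, phi (t, x) = x].

Definition flow_img (phi : R * X -> X) (t : R) (U : set X) : set X :=
  [set phi (t, u) | u in U].

Definition dyn_isolated (phi : R * X -> X) (K : set X) : Prop :=
  compact K /\ (forall t, flow_img phi t K = K) /\
  exists U : set X, (exists V : set X, open V /\ K `<=` V /\ V `<=` U) /\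
    K = \bigcap_(t in [set: R]) flow_img phi t U.

Definition diam (A : set X) : R :=
  sup [set mdist x y | x in A & y in A].

End Flows.

(* Were there non-singular points with arbitrarily small orbits, by compactness
   they would accumulate at some p.  Continuity of each phi_t forces p to be a
   singularity: phi_t p is close to phi_t y, which is close to y, which is
   close to p.  So p lies in the open set V around Sing(phi); a point y near p
   with orbit of small diameter then has its whole orbit inside V, hence in
   the isolating neighbourhood U, so y belongs to the maximal invariant set of
   U, which is Sing(phi), although y is not singular. *)

From HB Require Import structures.
From mathcomp Require Import all_boot all_order all_algebra.
From mathcomp Require Import all_classical all_reals all_analysis.
From mathcomp Require Import lra.
Import Order.TTheory GRing.Theory Num.Theory numFieldTopology.Exports numFieldNormedType.Exports.
Local Open Scope classical_set_scope.
Local Open Scope ring_scope.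

Section MetricCompact.
Context {R : realType} {X : metricType R}.

Lemma continuous_mdist (x0 : X) : continuous (mdist x0).
Proof.
move=> y; apply/(@cvgrPdist_lt _ R) => e e0.
have := @nbhsx_ballx _ _ y e e0; apply: filterS => z; rewrite ballEmdist /= => yz.
have T1 := metric_triangle x0 y z; have T2 := metric_triangle x0 z y.
rewrite (metric_sym z y) in T2.
by rewrite ltr_norml; apply/andP; split; lra.
Qed.

Lemma compact_mdist_bounded : compact [set: X] ->
  exists M : R, forall a b : X, mdist a b <= M.
Proof.
move=> cX; have [[x0 _]|X0] := pselect ([set: X] !=set0); last first.
  by exists 0 => a; exfalso; apply: X0; exists a.
have [c _ maxc] := compact_EVT_max (f := mdist x0) (ex_intro _ x0 I) cX
  (continuous_subspaceT (@continuous_mdist x0)).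
exists (mdist x0 c + mdist x0 c) => a b.
rewrite (le_trans (metric_triangle a x0 b)) // metric_sym.
by rewrite lerD // maxc // inE.
Qed.

Lemma mdist_le_diam (A : set X) :
  (exists M : R, forall a b : X, mdist a b <= M) ->
  forall a b, A a -> A b -> mdist a b <= diam A.
Proof.
move=> [M HM] a b Aa Ab; apply: sup_upper_bound; last by exists a => //; exists b.
split; first by exists (mdist a b); exists a => //; exists b.
by exists M => _ [x Ax [y Ay <-]].
Qed.

Lemma compact_cluster_nested (P : R -> set X) : compact [set: X] ->
  (forall e, 0 < e -> P e !=set0) ->
  (forall e1 e2, 0 < e1 -> e1 <= e2 -> P e1 `<=` P e2) ->
  exists p : X, forall e r, 0 < e -> 0 < r -> exists y, P e y /\ mdist p y < r.
Proof.
move=> cX Pne Pmon.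
pose F := filter_from [set e : R | 0 < e] P.
have FF : Filter F.
  apply: filter_from_filter; first by exists 1; rewrite /= ltr01.
  move=> i j /= i0 j0; have m0 : 0 < Num.min i j by rewrite lt_min i0 j0.
  exists (Num.min i j) => // y Py.
  by split; apply: (Pmon (Num.min i j)); rewrite // ge_min lexx ?orbT.
have [p [_ clp]] := cX F (filter_from_proper FF Pne) filterT.
exists p => e r e0 r0.
have [y [Py]] := clp (P e) (ball p r) (ex_intro2 _ _ e e0 (@subset_refl _ _))
  (@nbhsx_ballx _ _ p r r0).
by rewrite ballEmdist /= => hy; exists y.
Qed.

End MetricCompact.

Section SmallOrbits.
Context {R : realType} {X : metricType R} {phi : R * X -> X}.
Hypotheses (cX : compact [set: X]) (phic : continuous phi).
Hypotheses (phi0 : forall x, phi (0, x) = x)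
  (phiD : forall t s x, phi (t + s, x) = phi (t, phi (s, x))).

Lemma continuous_flow_at (t : R) : continuous (fun y => phi (t, y)).
Proof.
move=> y; apply: continuous_comp (phic (t, y)).
exact: (cvg_pair (cvg_cst t) cvg_id).
Qed.

Lemma mdist_flow_le_diam_orbit (x : X) (s : R) :
  mdist x (phi (s, x)) <= diam (flow_orbit phi x).
Proof.
apply: (mdist_le_diam _ (compact_mdist_bounded cX)).
  by exists 0; rewrite ?phi0.
by exists s.
Qed.

Lemma Sing_limit_small_orbits (p : X) :
  (forall e r, 0 < e -> 0 < r ->
    exists y, diam (flow_orbit phi y) < e /\ mdist p y < r) ->
  Sing phi p.
Proof.
move=> small t; apply: contrapT => ne.
pose e := mdist p (phi (t, p)).
have e0 : 0 < e by rewrite mdist_gt0; apply/eqP => h; apply: ne; rewrite -h.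
have e30 : 0 < e / 3 by rewrite divr_gt0.
have /(@metricType_numDomainType.nbhs_mdistP R X) [r /= r0 near_p] :
    \forall y \near p, mdist (phi (t, p)) (phi (t, y)) < e / 3.
  exact: (metricType_numDomainType.cvgr_dist_lt (continuous_flow_at t p) e30).
have m0 : 0 < Num.min r (e / 3) by rewrite lt_min r0 e30.
have [y [small_y py]] := small _ _ e30 m0.
move: py; rewrite lt_min => /andP[py_r py_e].
have yty := le_lt_trans (mdist_flow_le_diam_orbit y t) small_y.
have tpty := near_p y py_r.
have T1 := metric_triangle p y (phi (t, p)).
have T2 := metric_triangle y (phi (t, y)) (phi (t, p)).
rewrite (metric_sym (phi (t, y))) in T2.
rewrite -/e in T1; clearbody e; clear ne near_p small; lra.
Qed.

Lemma small_orbit_in_maximal_invariant {U : set X} {p : X} : nbhs p U ->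
  exists2 r : R, 0 < r & forall y, mdist p y < r ->
    diam (flow_orbit phi y) < r -> (\bigcap_(t in [set: R]) flow_img phi t U) y.
Proof.
move=> /(@metricType_numDomainType.nbhs_mdistP R X) [r /= r0 pU].
exists (r / 2); first by rewrite divr_gt0.
move=> y py small_y t _; exists (phi (- t, y)); last by rewrite -phiD subrr phi0.
apply: pU => /=; have T := metric_triangle p y (phi (- t, y)).
have := le_lt_trans (mdist_flow_le_diam_orbit y (- t)) small_y; lra.
Qed.

End SmallOrbits.

Theorem mainTheorem12 (R : realType) (X : metricType R) (phi : R * X -> X) :
  compact [set: X] -> is_flow phi -> dyn_isolated phi (Sing phi) ->
  exists2 beta0 : R, 0 < beta0 &
    forall x : X, ~ Sing phi x -> beta0 <= diam (flow_orbit phi x).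
Proof.
move=> cX [phic [phi0 phiD]] [_ [_ [U [[V [oV [SingV VU]]] SingE]]]].
apply: contrapT => no_beta.
pose P e := [set x | ~ Sing phi x /\ diam (flow_orbit phi x) < e].
have Pne e : 0 < e -> P e !=set0.
  move=> e0; apply: contrapT => P0; apply: no_beta; exists e => // x nx.
  by rewrite leNgt; apply/negP => hx; apply: P0; exists x.
have Pmon e1 e2 : 0 < e1 -> e1 <= e2 -> P e1 `<=` P e2.
  by move=> _ le12 y [ny hy]; split => //; apply: lt_le_trans le12.
have [p clp] := compact_cluster_nested P cX Pne Pmon.
have Sp : Sing phi p.
  apply: (Sing_limit_small_orbits cX phic phi0) => e r e0 r0.
  by have [y [[_ ?] ?]] := clp e r e0 r0; exists y.
have pV : nbhs p V := open_nbhs_nbhs (conj oV (SingV p Sp)).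
have [r r0 inU] := small_orbit_in_maximal_invariant cX phi0 phiD (filterS VU pV).
have [y [[ny small_y] py]] := clp r r r0 r0.
by apply: ny; rewrite SingE; exact: inU.
Qed.
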